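(* Let $K=3$ and let $l>m\ge s$ be nonnegative integers. Then \[ h(l,\,m+1,\,s)\ \ge\ h(l+1,\,m,\,s)\qquad\text{and}\qquad h(l,\,m,\,s+1)\ \ge\ h(l+1,\,m,\,s). \]
   Context: For a vector $\vec n=(n_1,n_2,n_3)$ of nonnegative integers, the following random process is run: stocks start at $\vec n^{(0)}=\vec n$; at each step $t=1,2,\dots$, as long as at least two coordinates of $\vec n^{(t-1)}$ are nonzero, an index $i$ is chosen uniformly at random (independently of the past) among the indices with $n_i^{(t-1)}>0$, and $\vec n^{(t)}=\vec n^{(t-1)}-\vec e_i$ ($\vec e_i$ the $i$-th standard unit vector). The process stops at the first time $T$ at which at most one coordinate is nonzero, and $h(\vec n)=\mathbb{E}[T]$. Equivalently, with $\operatorname{support}(\vec n)=\{i:n_i\ne 0\}$: $h(\vec n)=0$ if $|\operatorname{support}(\vec n)|\le1$, and otherwise $h(\vec n)=1+\frac{1}{|\operatorname{support}(\vec n)|}\sum_{i\in\operatorname{support}(\vec n)}h(\vec n-\vec e_i)$. Note $h$ is symmetric in its arguments. *)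

From mathcomp Require Import all_boot all_order all_algebra.
Set Implicit Arguments. Unset Strict Implicit. Unset Printing Implicit Defensive.
Import Order.TTheory GRing.Theory Num.Theory.
Local Open Scope ring_scope.

Definition supp_size (n1 n2 n3 : nat) : nat :=
  ((n1 != 0%N) + (n2 != 0%N) + (n3 != 0%N))%N.

(* h computed by recursion with fuel; fuel n1+n2+n3 suffices since each
   step decreases the total stock by one. *)
Fixpoint h_fuel (fuel : nat) (n1 n2 n3 : nat) : rat :=
  match fuel with
  | 0%N => 0
  | f.+1 =>
    if (supp_size n1 n2 n3 <= 1)%N then 0
    else 1 + (supp_size n1 n2 n3)%:R^-1 *
         ((if n1 != 0%N then h_fuel f n1.-1 n2 n3 else 0)
        + (if n2 != 0%N then h_fuel f n1 n2.-1 n3 else 0)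
        + (if n3 != 0%N then h_fuel f n1 n2 n3.-1 else 0))
  end.

(* h(n) = E[T], expected stopping time of the depletion process. *)
Definition h (n1 n2 n3 : nat) : rat := h_fuel (n1 + n2 + n3) n1 n2 n3.

(* Let gain(a,b,c) = h(a,b+1,c) - h(a+1,b,c) be the effect of moving one unit
   from the first stock to the second.  By induction on the total stock one
   proves simultaneously that gain(a,b,c) >= 0 when b <= a and c <= a+1, and
   that gain(a,b,c+1) + gain(c,b,a+1) >= 0 when b <= a and b <= c.  One step of
   the recursion of h writes a gain as an average of gains of smaller total
   stock; the only terms escaping the range of the first statement arise when
   c = a+1, and the symmetry of h pairs them into instances of the second. *)

From mathcomp Require Import all_boot all_order all_algebra.
From mathcomp Require Import lra zify.
Import Order.TTheory GRing.Theory Num.Theory.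
Local Open Scope ring_scope.

Lemma h_fuel_eq f g n1 n2 n3 :
  (n1 + n2 + n3 <= f)%N -> (n1 + n2 + n3 <= g)%N ->
  h_fuel f n1 n2 n3 = h_fuel g n1 n2 n3.
Proof.
elim: f g n1 n2 n3 => [|f IH] [|g] n1 n2 n3 Hf Hg //=;
  try by have [-> -> ->] : [/\ n1 = 0%N, n2 = 0%N & n3 = 0%N] by split; lia.
case: ifP => // _; congr (_ + _ * (_ + _ + _)).
- by case: n1 Hf Hg => //= n1 Hf Hg; apply: IH; lia.
- by case: n2 Hf Hg => //= n2 Hf Hg; apply: IH; lia.
- by case: n3 Hf Hg => //= n3 Hf Hg; apply: IH; lia.
Qed.

Lemma hE n1 n2 n3 : h n1 n2 n3 =
  if (supp_size n1 n2 n3 <= 1)%N then 0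
  else 1 + (supp_size n1 n2 n3)%:R^-1 *
       ((if n1 != 0%N then h n1.-1 n2 n3 else 0)
      + (if n2 != 0%N then h n1 n2.-1 n3 else 0)
      + (if n3 != 0%N then h n1 n2 n3.-1 else 0)).
Proof.
rewrite /h; case E: (n1 + n2 + n3)%N => [|t].
  by have [-> -> ->] : [/\ n1 = 0%N, n2 = 0%N & n3 = 0%N] by split; lia.
rewrite /=; case: ifP => // _; congr (_ + _ * (_ + _ + _)).
- by case: n1 E => //= n1 E; apply: h_fuel_eq; lia.
- by case: n2 E => //= n2 E; apply: h_fuel_eq; lia.
- by case: n3 E => //= n3 E; apply: h_fuel_eq; lia.
Qed.

Lemma hSSS a b c :
  h a.+1 b.+1 c.+1 = 1 + 3%:R^-1 * (h a b.+1 c.+1 + h a.+1 b c.+1 + h a.+1 b.+1 c).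
Proof. by rewrite hE. Qed.

Lemma hSS0 a b : h a.+1 b.+1 0 = 1 + 2%:R^-1 * (h a b.+1 0 + h a.+1 b 0).
Proof. by rewrite hE /= addr0. Qed.

Lemma hS0S a c : h a.+1 0 c.+1 = 1 + 2%:R^-1 * (h a 0 c.+1 + h a.+1 0 c).
Proof. by rewrite hE /= addr0. Qed.

Lemma hn00 a : h a 0 0 = 0.
Proof. by rewrite hE /supp_size; case: a. Qed.

Lemma h_ge0 a b c : 0 <= h a b c.
Proof.
rewrite /h; move: (a + b + c)%N => f.
elim: f a b c => [|f IH] a b c //=.
case: ifP => // _; rewrite addr_ge0 // mulr_ge0 ?invr_ge0 ?ler0n //.
by rewrite !addr_ge0 //; case: ifP.
Qed.

Lemma h_fuelC12 f a b c : h_fuel f a b c = h_fuel f b a c.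
Proof.
elim: f a b c => [|f IH] a b c //=.
have -> : supp_size b a c = supp_size a b c by rewrite /supp_size [(_ + (a != 0%N))%N]addnC.
case: ifP => // _; rewrite (IH b.-1) (IH b) (IH b a c.-1); congr (_ + _ * _); lra.
Qed.

Lemma h_fuelC23 f a b c : h_fuel f a b c = h_fuel f a c b.
Proof.
elim: f a b c => [|f IH] a b c //=.
have -> : supp_size a c b = supp_size a b c by rewrite /supp_size addnAC.
case: ifP => // _; rewrite (IH a c.-1) (IH a.-1) (IH a c); congr (_ + _ * _); lra.
Qed.

Lemma hC12 a b c : h a b c = h b a c.
Proof. by rewrite /h h_fuelC12 (addnC a b). Qed.

Lemma hC23 a b c : h a b c = h a c b.
Proof. by rewrite /h h_fuelC23 addnAC. Qed.

Lemma hC13 a b c : h a b c = h c b a.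
Proof. by rewrite hC12 hC23 hC12. Qed.

Definition gain a b c : rat := h a b.+1 c - h a.+1 b c.

Section InductionStep.

Variable n : nat.

Hypothesis gain_ge0_lt : forall a b c, (a + b + c < n)%N ->
  (b <= a)%N -> (c <= a.+1)%N -> 0 <= gain a b c.

Hypothesis gain_pair_ge0_lt : forall a b c, (a + b + c.+1 < n)%N ->
  (b <= a)%N -> (b <= c)%N -> 0 <= gain a b c.+1 + gain c b a.+1.

Lemma gain_ge0_step a b c : (a + b + c < n.+1)%N ->
  (b <= a)%N -> (c <= a.+1)%N -> 0 <= gain a b c.
Proof.
move=> Hn Hba Hca; rewrite /gain.
case: (ltngtP b a) Hba => // [Hba|->] _; last by rewrite hC12 subrr.
case: a Hba Hca Hn => [|a] // Hba Hca Hn.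
have IH a' b' c' : (a' + b' + c' < n)%N -> (b' <= a')%N -> (c' <= a'.+1)%N ->
    h a'.+1 b' c' <= h a' b'.+1 c'.
  by move=> *; rewrite -subr_ge0; exact: gain_ge0_lt.
case: b Hba Hn => [|b] Hba Hn; case: c Hca Hn => [|c] Hca Hn.
- by rewrite hn00 subr_ge0 h_ge0.
- rewrite (hS0S a.+1 c) (hSSS a 0 c) subr_ge0.
  have G1 := IH a.+1 0 c ltac:(lia) ltac:(lia) ltac:(lia).
  have [Hc|Ec] : (c <= a)%N \/ c = a.+1 by lia.
  + have G2 := IH a 0 c.+1 ltac:(lia) ltac:(lia) ltac:(lia).
    have G3 := IH a.+1 c 0 ltac:(lia) ltac:(lia) ltac:(lia).
    rewrite (hC23 a.+2) (hC23 a.+1 c.+1) in G3; lra.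
  + subst c.
    have J := gain_pair_ge0_lt a 0 a.+1 ltac:(lia) ltac:(lia) ltac:(lia).
    have E := hC13 a.+2 0 a.+1.
    rewrite /gain in J; lra.
- rewrite (hSS0 a.+1 b) (hSS0 a b.+1) subr_ge0.
  have G1 := IH a.+1 b 0 ltac:(lia) ltac:(lia) ltac:(lia).
  have G2 := IH a b.+1 0 ltac:(lia) ltac:(lia) ltac:(lia).
  lra.
- rewrite (hSSS a.+1 b) (hSSS a b.+1) subr_ge0.
  have G1 := IH a.+1 b c.+1 ltac:(lia) ltac:(lia) ltac:(lia).
  have G2 := IH a.+1 b.+1 c ltac:(lia) ltac:(lia) ltac:(lia).
  have [Hc|Ec] : (c <= a)%N \/ c = a.+1 by lia.
  + have G3 := IH a b.+1 c.+1 ltac:(lia) ltac:(lia) ltac:(lia); lra.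
  + subst c.
    have J := gain_pair_ge0_lt a b.+1 a.+1 ltac:(lia) ltac:(lia) ltac:(lia).
    rewrite /gain in J; lra.
Qed.

Lemma gain_pair_ge0_step a b c : (a + b + c.+1 < n.+1)%N ->
  (b <= a)%N -> (b <= c)%N -> 0 <= gain a b c.+1 + gain c b a.+1.
Proof.
move=> Hn Hba Hbc.
have [Eab|Hab] := eqVneq a b.
  subst b; have G := gain_ge0_step c a a.+1 ltac:(lia) ltac:(lia) ltac:(lia).
  by rewrite /gain (hC12 a) in G *; lra.
have [Ecb|Hcb] := eqVneq c b.
  subst b; have G := gain_ge0_step a c c.+1 ltac:(lia) ltac:(lia) ltac:(lia).
  by rewrite /gain (hC12 c) in G *; lra.
have {Hab} Hba : (b < a)%N by lia.
have {Hcb} Hbc : (b < c)%N by lia.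
case: a Hba Hn => [|a] Hba Hn; first by exfalso; rewrite ltn0 in Hba.
case: c Hbc Hn => [|c] Hbc Hn; first by exfalso; rewrite ltn0 in Hbc.
rewrite /gain; case: b Hba Hbc Hn => [|b] Hba Hbc Hn.
- rewrite (hSSS a 0) (hS0S a.+1) (hSSS c 0) (hS0S c.+1).
  have E1 := hC13 c.+1 0 a.+2.
  have E2 := hC13 c.+2 0 a.+1.
  have J1 := gain_pair_ge0_lt a 0 c.+1 ltac:(lia) ltac:(lia) ltac:(lia).
  have J2 := gain_pair_ge0_lt c 0 a.+1 ltac:(lia) ltac:(lia) ltac:(lia).
  rewrite /gain in J1 J2; lra.
- rewrite (hSSS a b.+1) (hSSS a.+1 b) (hSSS c b.+1) (hSSS c.+1 b).
  have J1 := gain_pair_ge0_lt a b.+1 c.+1 ltac:(lia) ltac:(lia) ltac:(lia).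
  have J2 := gain_pair_ge0_lt c b.+1 a.+1 ltac:(lia) ltac:(lia) ltac:(lia).
  have J3 := gain_pair_ge0_lt a.+1 b c.+1 ltac:(lia) ltac:(lia) ltac:(lia).
  rewrite /gain in J1 J2 J3; lra.
Qed.

End InductionStep.

Lemma gain_ge0 a b c : (b <= a)%N -> (c <= a.+1)%N -> 0 <= gain a b c.
Proof.
suff gain_lt n : (forall a b c, (a + b + c < n)%N ->
                    (b <= a)%N -> (c <= a.+1)%N -> 0 <= gain a b c) /\
                 (forall a b c, (a + b + c.+1 < n)%N ->
                    (b <= a)%N -> (b <= c)%N -> 0 <= gain a b c.+1 + gain c b a.+1).
  exact: (gain_lt (a + b + c).+1).1.
elim: n => [|n [IHgain IHpair]]; first by split.
split=> a' b' c'; first exact: gain_ge0_step IHgain IHpair a' b' c'.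
exact: gain_pair_ge0_step IHgain IHpair a' b' c'.
Qed.

Theorem lemma3 (l m s : nat) (hlm : (m < l)%N) (hms : (s <= m)%N) :
  h (l + 1) m s <= h l (m + 1) s /\ h (l + 1) m s <= h l m (s + 1).
Proof.
rewrite !addn1; split; rewrite -subr_ge0; first by apply: (gain_ge0 l m s); lia.
by rewrite (hC23 l.+1) (hC23 l); apply: (gain_ge0 l s m); lia.
Qed.
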